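(* Let $(a_n)_{n\ge0}$ be a sequence of positive real numbers, and set $u_n=\frac{a_{2n-1}}{a_{2n}}$ and $v_n=\frac{2na_{2n}}{(2n+1)a_{2n+1}}$ for $n\ge1$. Suppose (i) $(u_n)$ and $(v_n)$ are decreasing in $n$; (ii) $\sum_{i=1}^n a_{2i-1}u_n^{2i-1}<a_0$ for all $n\ge1$; (iii) $\sum_{i=1}^n 2ia_{2i}v_n^{2i-1}<a_1$ for all $n\ge1$. Then for every $m\ge0$ the polynomial $\sum_{i=0}^m a_ix^i$ has no real root if $m$ is even and exactly one real root (counted with multiplicity) if $m$ is odd. *)

From mathcomp Require Import all_boot all_order all_algebra.
Set Implicit Arguments. Unset Strict Implicit. Unset Printing Implicit Defensive.
Import Order.TTheory GRing.Theory Num.Theory.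
Local Open Scope ring_scope.

Definition useq (R : realFieldType) (a : nat -> R) (n : nat) : R :=
  a (2 * n - 1)%N / a (2 * n)%N.
Definition vseq (R : realFieldType) (a : nat -> R) (n : nat) : R :=
  ((2 * n)%:R * a (2 * n)%N) / ((2 * n + 1)%:R * a (2 * n + 1)%N).
Definition trunc_poly (R : realFieldType) (a : nat -> R) (m : nat) : {poly R} :=
  \poly_(i < m.+1) a i.

From mathcomp Require Import all_boot all_order all_algebra.
From mathcomp Require Import ring lra zify polyrcf.
Set Implicit Arguments. Unset Strict Implicit.
Import Order.TTheory GRing.Theory Num.Theory.
Local Open Scope ring_scope.

(* Write w_k = b_{2k+1}/b_{2k+2} for a positive coefficient
   sequence b.  If sum_{i<=k} b_{2i+1} w_k^{2i+1} < b_0 for every k (the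
   "odd ratio bound"), then every even truncation sum_{i<=2n} b_i x^i is
   positive on the whole real line: group the terms in pairs
   b_{2i+1}x^{2i+1} + b_{2i+2}x^{2i+2}; if the last pair is negative then
   x < 0 and |x| < w_n, so every pair is at least -b_{2i+1} w_n^{2i+1}, and
   the bound gives positivity; otherwise drop the last pair and induct.
   Hypothesis (ii) is the odd ratio bound for (a_i), so even truncations of
   sum a_i x^i have no root.  Hypothesis (iii) is the odd ratio bound for the
   coefficients (i+1) a_{i+1} of the derivative, so an odd truncation has an
   everywhere positive derivative; being of odd degree it has a root, which
   is then simple and unique since the polynomial is strictly increasing. *)

Section EvenTruncations.
Variable R : realFieldType.

Definition odd_ratio_bound (b : nat -> R) : Prop :=
  forall k, \sum_(i < k.+1) b (2*i+1)%N * (b (2*k+1)%N / b (2*k+2)%N) ^+ (2*i+1)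
            < b 0%N.

Lemma neg_pair_bound (b1 b2 x : R) (k : nat) : 0 < b1 -> 0 < b2 ->
  b1 * x ^+ (2*k+1) + b2 * x ^+ (2*k+2) < 0 -> x < 0 /\ - x < b1 / b2.
Proof.
move=> b1pos b2pos hneg.
have xneg : x < 0.
  rewrite ltNge; apply/negP => xpos; move: hneg; rewrite ltNge => /negP; apply.
  by rewrite addr_ge0 // mulr_ge0 ?exprn_ge0 // ltW.
split=> //; rewrite ltr_pdivlMr //.
have xodd_neg : x ^+ (2*k+1) < 0 by rewrite exprn_odd_lt0 // oddD oddM.
have factor : b1 * x ^+ (2*k+1) + b2 * x ^+ (2*k+2)
              = x ^+ (2*k+1) * (b1 + b2 * x).
  by rewrite (_ : x ^+ (2*k+2) = x ^+ (2*k+1) * x) ?(exprSr, addn1, addn2); ring.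
by move: hneg; rewrite factor nmulr_rlt0 // => h; nra.
Qed.

Lemma pair_lower_bound (b1 b2 x w : R) (i : nat) : 0 < b1 -> 0 < b2 ->
  x < 0 -> - x <= w ->
  - (b1 * w ^+ (2*i+1)) <= b1 * x ^+ (2*i+1) + b2 * x ^+ (2*i+2).
Proof.
move=> b1pos b2pos xneg xw.
rewrite -[X in X <= _]addr0; apply: lerD; last first.
  by apply: mulr_ge0; [exact: ltW|rewrite exprn_even_ge0 // oddD oddM].
rewrite -mulrN ler_pM2l // -[x]opprK exprNn -signr_odd oddD oddM /= expr1.
have negx_ge0 : 0 <= - x by rewrite oppr_ge0 ltW.
rewrite mulN1r lerN2; apply: lerXn2r => //; rewrite nnegrE //.
exact: le_trans xw.
Qed.

Variables (b : nat -> R) (bpos : forall n, 0 < b n).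

Lemma pair_sum_gt (hb : odd_ratio_bound b) (n : nat) (x : R) :
  - b 0%N < \sum_(i < n) (b (2*i+1)%N * x ^+ (2*i+1) + b (2*i+2)%N * x ^+ (2*i+2)).
Proof.
elim: n => [|n IH]; first by rewrite big_ord0 oppr_lt0.
have [lastpos|lastneg] := lerP 0 (b (2*n+1)%N * x ^+ (2*n+1) + b (2*n+2)%N * x ^+ (2*n+2)).
  by rewrite big_ord_recr /=; exact: ltr_wpDr.
have [xneg xw] := neg_pair_bound (bpos _) (bpos _) lastneg.
apply: (lt_le_trans _ (y := \sum_(i < n.+1)
          - (b (2*i+1)%N * (b (2*n+1)%N / b (2*n+2)%N) ^+ (2*i+1)))).
  by rewrite sumrN ltrN2 hb.
by apply: ler_sum => i _; apply: pair_lower_bound => //; exact: ltW.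
Qed.

Lemma even_sum_pairs (n : nat) (x : R) :
  \sum_(i < (2*n).+1) b i * x ^+ i =
  b 0%N + \sum_(i < n) (b (2*i+1)%N * x ^+ (2*i+1) + b (2*i+2)%N * x ^+ (2*i+2)).
Proof.
elim: n => [|n IH]; first by rewrite big_ord1 big_ord0 expr0 mulr1 addr0.
rewrite (_ : (2*n.+1).+1 = ((2*n).+1).+2)%N; last by rewrite mulnS.
rewrite [in RHS]big_ord_recr /= big_ord_recr /= big_ord_recr /= IH !addn1 !addn2 /=.
ring.
Qed.

Lemma even_trunc_pos (hb : odd_ratio_bound b) (n : nat) (x : R) :
  0 < (trunc_poly b (2*n)).[x].
Proof.
rewrite /trunc_poly horner_poly even_sum_pairs.
have := pair_sum_gt hb n x; lra.
Qed.

End EvenTruncations.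

Section IncreasingPolynomials.
Variable R : rcfType.
Variables (p : {poly R}) (dpos : forall y, 0 < p^`().[y]).

Lemma deriv_pos_increasing (x y : R) : x < y -> p.[x] < p.[y].
Proof.
move=> xy; have [c _ mvt] := poly_mvt p xy.
by rewrite -subr_gt0 mvt mulr_gt0 // subr_gt0.
Qed.

Lemma deriv_pos_mup (x : R) : root p x -> mup x p = 1%N.
Proof.
move=> rx; have [q pq] := factor_theorem _ _ rx.
have qx : ~~ root q x.
  have := dpos x; rewrite pq derivM derivXsubC mulr1 hornerD hornerM.
  by rewrite hornerXsubC subrr mulr0 add0r rootE => /gt_eqF ->.
by rewrite pq mupMr // -['X - x%:P]expr1 mup_XsubCX eqxx.
Qed.

Lemma deriv_pos_root_unique (x y : R) : root p x -> root p y -> y = x.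
Proof.
move=> /rootP rx /rootP ry; case: (ltgtP x y) => // [xy|yx].
  by have := deriv_pos_increasing xy; rewrite rx ry ltxx.
by have := deriv_pos_increasing yx; rewrite rx ry ltxx.
Qed.

End IncreasingPolynomials.

Lemma deriv_trunc_poly (R : realFieldType) (a : nat -> R) (m : nat) :
  (trunc_poly a m.+1)^`() = trunc_poly (fun j => j.+1%:R * a j.+1) m.
Proof.
apply/polyP => i; rewrite coef_deriv !coef_poly ltnS.
by case: ifP => _; rewrite ?mul0rn // mulr_natl.
Qed.

Lemma hyp_ii_ratio_bound (R : realFieldType) (a : nat -> R) :
  (forall n, (1 <= n)%N ->
     \sum_(1 <= i < n.+1) a (2 * i - 1)%N * useq a n ^+ (2 * i - 1) < a 0%N) ->
  odd_ratio_bound a.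
Proof.
move=> hii k; have := hii k.+1 isT; rewrite big_add1 /= big_mkord.
have -> : useq a k.+1 = a (2*k+1)%N / a (2*k+2)%N.
  rewrite /useq (_ : (2 * k.+1 - 1 = 2*k+1)%N); last by lia.
  by rewrite (_ : (2 * k.+1 = 2*k+2)%N) //; lia.
congr (_ < _); apply: eq_bigr => i _.
by rewrite (_ : (2 * i.+1 - 1 = 2*i+1)%N) //; lia.
Qed.

Lemma hyp_iii_ratio_bound (R : realFieldType) (a : nat -> R) :
  (forall n, (1 <= n)%N ->
     \sum_(1 <= i < n.+1) (2 * i)%:R * a (2 * i)%N * vseq a n ^+ (2 * i - 1) < a 1%N) ->
  odd_ratio_bound (fun j => j.+1%:R * a j.+1).
Proof.
move=> hiii k; have := hiii k.+1 isT; rewrite big_add1 /= big_mkord.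
have -> : vseq a k.+1 = (2*k+1).+1%:R * a (2*k+1).+1 / ((2*k+2).+1%:R * a (2*k+2).+1).
  rewrite /vseq (_ : (2 * k.+1 = (2*k+1).+1)%N); last by lia.
  by rewrite (_ : ((2*k+1).+1 + 1 = (2*k+2).+1)%N) //; lia.
rewrite mul1r; congr (_ < _); apply: eq_bigr => i _.
rewrite (_ : (2 * i.+1 - 1 = 2*i+1)%N); last by lia.
by rewrite (_ : (2 * i.+1 = (2*i+1).+1)%N) //; lia.
Qed.

Theorem mainTheorem13 (R : rcfType) (a : nat -> R)
  (apos : forall n, 0 < a n)
  (udec : forall n, (1 <= n)%N -> useq a n.+1 <= useq a n)
  (vdec : forall n, (1 <= n)%N -> vseq a n.+1 <= vseq a n)
  (hii : forall n, (1 <= n)%N ->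
     \sum_(1 <= i < n.+1) a (2 * i - 1)%N * useq a n ^+ (2 * i - 1) < a 0%N)
  (hiii : forall n, (1 <= n)%N ->
     \sum_(1 <= i < n.+1) (2 * i)%:R * a (2 * i)%N * vseq a n ^+ (2 * i - 1) < a 1%N) :
  forall m : nat,
    (~~ odd m -> forall x : R, ~~ root (trunc_poly a m) x) /\
    (odd m -> exists x : R, [/\ root (trunc_poly a m) x,
                                mup x (trunc_poly a m) = 1%N &
                                forall y : R, root (trunc_poly a m) y -> y = x]).
Proof.
have dcoef_pos : forall j, 0 < j.+1%:R * a j.+1 by move=> j; rewrite mulr_gt0 ?ltr0n.
have coef_bound := hyp_ii_ratio_bound hii.
have dcoef_bound := hyp_iii_ratio_bound hiii.
move=> m; split.
  move=> meven x; rewrite -[m]odd_double_half (negbTE meven) add0n -mul2n.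
  by rewrite rootE gt_eqF // even_trunc_pos.
move=> modd; rewrite -[m]odd_double_half modd add1n -mul2n.
set p := trunc_poly a (2 * m./2).+1.
have dpos : forall y, 0 < p^`().[y].
  by move=> y; rewrite deriv_trunc_poly even_trunc_pos.
have psize : size p = (2 * m./2).+2 by rewrite size_poly_eq //= gt_eqF.
have /odd_poly_root [x rx] : ~~ odd (size p) by rewrite psize /= negbK oddM.
exists x; split=> //; first exact: (deriv_pos_mup dpos rx).
by move=> y ry; exact: (deriv_pos_root_unique dpos rx ry).
Qed.
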